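(* Let $n,k\geq 1$ be integers with $n+k$ odd and let $A_1,\dots,A_k,B_1,\dots,B_k\in\mathbb{R}$. For $\alpha\in\mathbb{C}$ put $a_i=A_i+B_i\alpha$ ($i=1,\dots,k$) and $$O_\alpha(z)=z^n\,\frac{a_k+a_{k-1}z+\dots+a_1 z^{k-1}+z^k}{1+a_1 z+\dots+a_{k-1}z^{k-1}+a_k z^k},$$ considered for those $\alpha$ with $a_k\neq0$, $1+a_1+\dots+a_k\neq0$ and $1+\sum_{j=1}^k(-1)^ja_j\neq 0$; for such $\alpha$, $z=-1$ is a fixed point of $O_\alpha$. Define $$C=n+k+\sum_{j=1}^k(-1)^j(n+k-2j)A_j,\quad D=\sum_{j=1}^k(-1)^j(n+k-2j)B_j,\quad C'=1+\sum_{j=1}^k(-1)^jA_j,\quad D'=\sum_{j=1}^k(-1)^jB_j,$$ and, when $D^2-D'^2\neq0$, $c=(CD-C'D')/(D^2-D'^2)$ and $r=(C'D-CD')/(D^2-D'^2)$. Then: \begin{enumerate} \item If $D^2-D'^2\neq0$: (i) $z=-1$ is indifferent on the circle $S:\ |\alpha+c|=|r|$; (ii) $z=-1$ is attracting inside $S$ if $D^2-D'^2>0$ and outside $S$ if $D^2-D'^2<0$; (iii) $z=-1$ is repelling outside $S$ if $D^2-D'^2>0$ and inside $S$ if $D^2-D'^2<0$. \item If $D^2-D'^2=0$: (a) if $D=D'\neq0$: $z=-1$ is indifferent if $C=C'$; $z=-1$ is attracting if either $\mathrm{Re}(\alpha)<-\frac{C+C'}{2D}$ and $D(C-C')>0$,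 or $\mathrm{Re}(\alpha)>-\frac{C+C'}{2D}$ and $D(C-C')<0$; $z=-1$ is repelling otherwise. (b) if $D=-D'\neq0$: $z=-1$ is indifferent if $C=-C'$; $z=-1$ is attracting if either $\mathrm{Re}(\alpha)<\frac{C'-C}{2D}$ and $D(C+C')>0$, or $\mathrm{Re}(\alpha)>\frac{C'-C}{2D}$ and $D(C+C')<0$; $z=-1$ is repelling otherwise. (c) if $D=D'=0$: $z=-1$ is indifferent if $|C|=|C'|$, attracting if $|C|<|C'|$, and repelling if $|C|>|C'|$. \end{enumerate} Moreover, if $\alpha=-C/D$, the fixed point $z=-1$ is superattracting.
   Context: For a fixed point $z_0$ of a rational map $R$ with multiplier $\lambda=R'(z_0)$, $z_0$ is attracting if $|\lambda|<1$, superattracting if $\lambda=0$, repelling if $|\lambda|>1$, and indifferent if $|\lambda|=1$. *)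

From HB Require Import structures.
From mathcomp Require Import all_boot all_order all_algebra.
From mathcomp Require Import complex.
From mathcomp Require Import all_classical all_reals all_analysis.
Import Order.TTheory GRing.Theory Num.Theory.
Import numFieldNormedType.Exports.

Set Implicit Arguments.
Unset Strict Implicit.
Unset Printing Implicit Defensive.

Local Open Scope complex_scope.
Local Open Scope ring_scope.

Section Defs.
Variable R : realType.

Definition acoef (A B : nat -> R) (alpha : R[i]) (j : nat) : R[i] :=
  (A j)%:C + (B j)%:C * alpha.

Definition qcoef (A B : nat -> R) (alpha : R[i]) (j : nat) : R[i] :=
  if j == 0%N then 1 else acoef A B alpha j.

Definition Omap (n k : nat) (A B : nat -> R) (alpha : R[i]) (z : R[i]) : R[i] :=
  z ^+ n * (\sum_(j < k.+1) qcoef A B alpha (k - j) * z ^+ j)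
         / (\sum_(j < k.+1) qcoef A B alpha j * z ^+ j).

Definition multiplier (f : R[i] -> R[i]) (z0 : R[i]) : R[i] :=
  @derive1 (R[i])^o (R[i])^o f z0.

Definition fixed_point (f : R[i] -> R[i]) (z0 : R[i]) : Prop := f z0 = z0.

Definition attracting (lam : R[i]) : Prop := `|lam| < 1.
Definition superattracting (lam : R[i]) : Prop := lam = 0.
Definition repelling (lam : R[i]) : Prop := 1 < `|lam|.
Definition indifferent (lam : R[i]) : Prop := `|lam| = 1.

Definition Ccst (n k : nat) (A : nat -> R) : R :=
  (n + k)%:R + \sum_(1 <= j < k.+1) (-1) ^+ j * ((n + k)%:R - 2 * j%:R) * A j.
Definition Dcst (n k : nat) (B : nat -> R) : R :=
  \sum_(1 <= j < k.+1) (-1) ^+ j * ((n + k)%:R - 2 * j%:R) * B j.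
Definition C'cst (k : nat) (A : nat -> R) : R :=
  1 + \sum_(1 <= j < k.+1) (-1) ^+ j * A j.
Definition D'cst (k : nat) (B : nat -> R) : R :=
  \sum_(1 <= j < k.+1) (-1) ^+ j * B j.

End Defs.

(* At z = -1 the numerator of O_alpha is, up to the sign (-1)^k, the reversal
   of its denominator Q(z) = sum_j a_j z^j (a_0 = 1).  Since n + k is odd this
   makes -1 a fixed point, and the quotient rule gives the multiplier
     lambda = sum_j (-1)^j (n + k - 2j) a_j / sum_j (-1)^j a_j
            = (C + D alpha) / (C' + D' alpha),
   a Moebius function of alpha.  So |lambda| < 1, = 1 or > 1 according to the
   sign of |C + D alpha|^2 - |C' + D' alpha|^2, a real quadratic in Re alpha and
   Im alpha which equals (D^2 - D'^2) (|alpha + c|^2 - r^2) when D^2 <> D'^2,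
   2 D (C -+ C') (Re alpha - x) on the lines D = +-D', and C^2 - C'^2 when
   D = D' = 0. *)

From HB Require Import structures.
From mathcomp Require Import all_boot all_order all_algebra.
From mathcomp Require Import complex.
From mathcomp Require Import all_classical all_reals all_analysis.
From mathcomp Require Import ring lra.
Import Order.TTheory GRing.Theory Num.Theory.
Import numFieldNormedType.Exports.

Set Implicit Arguments.
Unset Strict Implicit.
Unset Printing Implicit Defensive.

Local Open Scope complex_scope.
Local Open Scope ring_scope.

Section FieldDerivatives.
Variable K : numFieldType.
Implicit Types (f g : K^o -> K^o) (x df dg : K^o).

Lemma is_derive_mul f g x df dg :
  is_derive x 1 f df -> is_derive x 1 g dg ->
  is_derive x 1 (fun z => f z * g z) (df * g x + f x * dg).
Proof.
move=> Hf Hg; have -> : (fun z => f z * g z) = f * g by [].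
by apply: is_derive_eq; rewrite /GRing.scale /=; ring.
Qed.

Lemma is_derive_div f g x df dg :
  is_derive x 1 f df -> is_derive x 1 g dg -> g x != 0 ->
  is_derive x 1 (fun z => f z / g z) ((df * g x - f x * dg) / g x ^+ 2).
Proof.
move=> Hf Hg gx0.
have g_derivable : derivable g x 1 by case: Hg.
have Hinv : is_derive x 1 (fun z => (g z)^-1) (- g x ^- 2 * dg).
  apply: DeriveDef; first exact: derivableV.
  by rewrite deriveV ?derive_val.
by apply: (is_derive_eq (is_derive_mul Hf Hinv)); field.
Qed.

Lemma is_derive_polysum (c : nat -> K) (m : nat) x :
  is_derive x 1 (fun z : K^o => \sum_(j < m) c j * z ^+ j)
    (\sum_(j < m) c j * (j%:R * x ^+ j.-1)).
Proof.
have -> : (fun z : K^o => \sum_(j < m) c j * z ^+ j) =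
    \sum_(j < m) (fun z : K^o => c j * z ^+ j).
  by apply/funext => z; rewrite fct_sumE.
apply: is_derive_sum => j.
have -> : (fun z : K^o => c j * z ^+ j) = c j \*: (id ^+ j).
  by apply/funext => z; rewrite /= exprfctE.
by apply: is_derive_eq; rewrite /= [_%:A]mulr1.
Qed.

Lemma is_derive_expr n x : is_derive x 1 (fun z : K^o => z ^+ n) (n%:R * x ^+ n.-1).
Proof.
have -> : (fun z : K^o => z ^+ n) = id ^+ n by apply/funext => z; rewrite exprfctE.
by apply: is_derive_eq; rewrite /GRing.scale /= mulr1.
Qed.

Lemma derive1_val f x df : is_derive x 1 f df -> derive1 f x = df.
Proof. by move=> Hf; rewrite derive1E derive_val. Qed.

End FieldDerivatives.

Lemma sum_rev_ord (V : nmodType) (k : nat) (F : nat -> V) :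
  \sum_(j < k.+1) F (k - j)%N = \sum_(j < k.+1) F j.
Proof.
by rewrite [RHS](reindex_inj rev_ord_inj); apply: eq_bigr => j _ /=; rewrite subSS.
Qed.

Lemma signr_subn (R : pzRingType) (k j : nat) : (j <= k)%N ->
  (-1) ^+ (k - j) = (-1) ^+ k * (-1) ^+ j :> R.
Proof. by move=> jk; rewrite -signr_odd oddB // signr_addb !signr_odd. Qed.

Lemma natr_mul_signr_pred (R : pzRingType) (m : nat) :
  m%:R * (-1) ^+ m.-1 = - (m%:R * (-1) ^+ m) :> R.
Proof. by case: m => [|m] /=; rewrite ?mul0r ?oppr0 // exprS mulN1r mulrN opprK. Qed.

Section ReciprocalRatio.
Variables (K : numFieldType) (n k : nat) (q : nat -> K).
Hypothesis odd_nk : odd (n + k).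

Let s := \sum_(j < k.+1) q j * (-1) ^+ j.
Let s1 := \sum_(j < k.+1) q j * ((-1) ^+ j * j%:R).

Lemma signr_odd_add : (-1) ^+ k = - (-1) ^+ n :> K.
Proof.
move: odd_nk; rewrite -(signr_odd _ k) -(signr_odd _ n) oddD.
by case: (odd n); case: (odd k); rewrite /= ?expr0 ?expr1 ?opprK.
Qed.

Lemma reciprocal_sum_at_minus1 :
  \sum_(j < k.+1) q (k - j)%N * (-1) ^+ j = (-1) ^+ k * s.
Proof.
rewrite -(sum_rev_ord _ (fun j => q (k - j)%N * (-1) ^+ j)) /s mulr_sumr.
by apply: eq_bigr => j _; rewrite subKn ?leq_ord // signr_subn ?leq_ord // mulrCA.
Qed.

Lemma reciprocal_sum_derivative_at_minus1 :
  \sum_(j < k.+1) q (k - j)%N * (j%:R * (-1) ^+ j.-1) = (-1) ^+ k * (s1 - k%:R * s).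
Proof.
rewrite -(sum_rev_ord _ (fun j => q (k - j)%N * (j%:R * (-1) ^+ j.-1))) /s /s1.
rewrite mulr_sumr -sumrB mulr_sumr; apply: eq_bigr => j _.
rewrite subKn ?leq_ord // natr_mul_signr_pred signr_subn ?leq_ord // natrB ?leq_ord //.
ring.
Qed.

Lemma sum_derivative_at_minus1 :
  \sum_(j < k.+1) q j * (j%:R * (-1) ^+ j.-1) = - s1.
Proof. by rewrite /s1 -sumrN; apply: eq_bigr => j _; rewrite natr_mul_signr_pred; ring. Qed.

Hypothesis s_neq0 : s != 0.

Lemma reciprocal_ratio_at_minus1 :
  (-1) ^+ n * (\sum_(j < k.+1) q (k - j)%N * (-1) ^+ j) / s = -1.
Proof.
rewrite reciprocal_sum_at_minus1 signr_odd_add mulrA mulrN -expr2 sqrr_sign.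
by rewrite -mulrA divff // mulr1.
Qed.

Lemma derive1_reciprocal_ratio_at_minus1 : (0 < n)%N ->
  derive1 (fun z : K^o => z ^+ n * (\sum_(j < k.+1) q (k - j)%N * z ^+ j)
                         / (\sum_(j < k.+1) q j * z ^+ j)) (-1)
  = (\sum_(j < k.+1) q j * ((-1) ^+ j * ((n + k)%:R - 2 * j%:R))) / s.
Proof.
move=> n_gt0.
have := is_derive_div
  (is_derive_mul (is_derive_expr n (-1)) (is_derive_polysum (fun j => q (k - j)%N) k.+1 (-1)))
  (is_derive_polysum q k.+1 (-1)) s_neq0.
move=> /derive1_val /= ->.
rewrite reciprocal_sum_at_minus1 reciprocal_sum_derivative_at_minus1 sum_derivative_at_minus1.
have -> : \sum_(j < k.+1) q j * ((-1) ^+ j * ((n + k)%:R - 2 * j%:R)) =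
    (n + k)%:R * s - 2 * s1.
  by rewrite /s /s1 mulr_sumr mulr_sumr -sumrB; apply: eq_bigr => j _; ring.
rewrite signr_odd_add -(prednK n_gt0) exprS natrD -signr_odd.
by rewrite -/s; case: (odd n.-1); rewrite /= ?expr0 ?expr1; field.
Qed.

End ReciprocalRatio.

Section OmapMultiplier.
Variables (R : realType) (n k : nat) (A B : nat -> R) (alpha : R[i]).

Lemma sum_qcoef_weighted (w : nat -> R) :
  \sum_(j < k.+1) qcoef A B alpha j * (w j)%:C =
  (w 0%N + \sum_(1 <= j < k.+1) w j * A j)%:C +
  (\sum_(1 <= j < k.+1) w j * B j)%:C * alpha.
Proof.
rewrite big_ord_recl !big_add1 !big_mkord rmorphD !rmorph_sum mulr_suml -addrA -big_split.
congr (_ + _); first by rewrite mul1r.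
apply: eq_bigr => j _; rewrite lift0 /qcoef /acoef !rmorphM /=; ring.
Qed.

Lemma qcoef_alternating_sum :
  \sum_(j < k.+1) qcoef A B alpha j * (-1) ^+ j = (C'cst k A)%:C + (D'cst k B)%:C * alpha.
Proof.
by rewrite -(sum_qcoef_weighted (fun j => (-1) ^+ j)); apply: eq_bigr => j _; rewrite rmorph_sign.
Qed.

Lemma acoef_alternating_sum :
  1 + \sum_(1 <= j < k.+1) (-1) ^+ j * acoef A B alpha j =
  (C'cst k A)%:C + (D'cst k B)%:C * alpha.
Proof.
rewrite -qcoef_alternating_sum big_ord_recl big_add1 big_mkord mul1r.
by congr (_ + _); apply: eq_bigr => j _; rewrite lift0 /qcoef mulrC.
Qed.

Lemma qcoef_weighted_sum :
  \sum_(j < k.+1) qcoef A B alpha j * ((-1) ^+ j * ((n + k)%:R - 2 * j%:R)) =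
  (Ccst n k A)%:C + (Dcst n k B)%:C * alpha.
Proof.
have := sum_qcoef_weighted (fun j => (-1) ^+ j * ((n + k)%:R - 2 * j%:R)).
rewrite /= expr0 mul1r mulr0n mulr0 subr0 => <-.
by apply: eq_bigr => j _; rewrite rmorphM rmorph_sign rmorphB rmorphM !rmorph_nat.
Qed.

Lemma Omap_fixed_minus1 : odd (n + k) ->
  (C'cst k A)%:C + (D'cst k B)%:C * alpha != 0 -> fixed_point (Omap n k A B alpha) (-1).
Proof. by rewrite -qcoef_alternating_sum; exact: reciprocal_ratio_at_minus1. Qed.

Lemma multiplier_Omap_minus1 : (0 < n)%N -> odd (n + k) ->
  (C'cst k A)%:C + (D'cst k B)%:C * alpha != 0 ->
  multiplier (Omap n k A B alpha) (-1) =
  ((Ccst n k A)%:C + (Dcst n k B)%:C * alpha) / ((C'cst k A)%:C + (D'cst k B)%:C * alpha).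
Proof.
rewrite -qcoef_alternating_sum -qcoef_weighted_sum => n_gt0 odd_nk s_neq0.
exact: derive1_reciprocal_ratio_at_minus1.
Qed.

End OmapMultiplier.

Lemma normf_div_lt1 (F : numFieldType) (u v : F) : v != 0 -> (`|u / v| < 1) = (`|u| < `|v|).
Proof. by move=> v0; rewrite normrM normfV ltr_pdivrMr ?normr_gt0 // mul1r. Qed.

Lemma normf_div_gt1 (F : numFieldType) (u v : F) : v != 0 -> (1 < `|u / v|) = (`|v| < `|u|).
Proof. by move=> v0; rewrite normrM normfV ltr_pdivlMr ?normr_gt0 // mul1r. Qed.

Lemma normf_div_eq1 (F : numFieldType) (u v : F) : v != 0 -> `|u| = `|v| -> `|u / v| = 1.
Proof. by move=> v0 uv; rewrite normrM normfV uv divff // normr_eq0. Qed.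

Section ComplexNorm.
Variable R : rcfType.
Implicit Types (u v z : R[i]) (x y : R).

Lemma normc_lt u v :
  (`|u| < `|v|) =
  (complex.Re u ^+ 2 + complex.Im u ^+ 2 < complex.Re v ^+ 2 + complex.Im v ^+ 2).
Proof. by rewrite -[RHS]ltcR !add_Re2_Im2 ltr_pXn2r // nnegrE normr_ge0. Qed.

Lemma normc_eq u v :
  (`|u| = `|v|) <->
  (complex.Re u ^+ 2 + complex.Im u ^+ 2 = complex.Re v ^+ 2 + complex.Im v ^+ 2).
Proof.
split=> [uv|]; first by apply: complexI; rewrite !add_Re2_Im2 uv.
move=> /(congr1 (real_complex R)); rewrite !add_Re2_Im2 => /eqP.
by rewrite eqrXn2 ?normr_ge0 // => /eqP.
Qed.

Lemma Re_affine x y z : complex.Re (x%:C + y%:C * z) = x + y * complex.Re z.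
Proof. by case: z => a b /=; rewrite mul0r subr0. Qed.

Lemma Im_affine x y z : complex.Im (x%:C + y%:C * z) = y * complex.Im z.
Proof. by case: z => a b /=; rewrite mul0r addr0 add0r. Qed.

Lemma Re_addC z x : complex.Re (z + x%:C) = complex.Re z + x.
Proof. by case: z. Qed.

Lemma Im_addC z x : complex.Im (z + x%:C) = complex.Im z.
Proof. by case: z => a b /=; rewrite addr0. Qed.

End ComplexNorm.

Section MobiusMultiplier.
Variables (R : realType) (C D C' D' : R) (alpha : R[i]).
Hypothesis den_neq0 : C'%:C + D'%:C * alpha != 0.

Let lam := (C%:C + D%:C * alpha) / (C'%:C + D'%:C * alpha).
Let a := complex.Re alpha.
Let b := complex.Im alpha.
Let gap := (C + D * a) ^+ 2 + (D * b) ^+ 2 - ((C' + D' * a) ^+ 2 + (D' * b) ^+ 2).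

Lemma mobius_attracting : gap < 0 -> attracting lam.
Proof.
by rewrite subr_lt0 /attracting normf_div_lt1 // normc_lt !Re_affine !Im_affine.
Qed.

Lemma mobius_repelling : 0 < gap -> repelling lam.
Proof.
by rewrite subr_gt0 /repelling normf_div_gt1 // normc_lt !Re_affine !Im_affine.
Qed.

Lemma mobius_indifferent : gap = 0 -> indifferent lam.
Proof.
move=> /eqP; rewrite subr_eq0 => /eqP gap0.
by apply: normf_div_eq1 => //; apply/normc_eq; rewrite !Re_affine !Im_affine.
Qed.

Lemma mobius_circle_classification :
  let Delta := D ^+ 2 - D' ^+ 2 in Delta != 0 ->
  let c := (C * D - C' * D') / Delta in
  let r := (C' * D - C * D') / Delta in
  (`|alpha + c%:C| = `|r%:C| -> indifferent lam) /\
  (`|alpha + c%:C| < `|r%:C| ->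
     (0 < Delta -> attracting lam) /\ (Delta < 0 -> repelling lam)) /\
  (`|r%:C| < `|alpha + c%:C| ->
     (0 < Delta -> repelling lam) /\ (Delta < 0 -> attracting lam)).
Proof.
move=> Delta Delta_neq0 c r.
have gapE : gap = Delta * ((a + c) ^+ 2 + b ^+ 2 - r ^+ 2).
  by rewrite /gap /c /r /Delta; field.
have shiftE : complex.Re (alpha + c%:C) ^+ 2 + complex.Im (alpha + c%:C) ^+ 2 =
    (a + c) ^+ 2 + b ^+ 2 by rewrite Re_addC Im_addC.
have radiusE : complex.Re r%:C ^+ 2 + complex.Im r%:C ^+ 2 = r ^+ 2.
  by rewrite /= expr0n addr0.
split; [|split].
- move=> /normc_eq; rewrite shiftE radiusE => onS.
  by apply: mobius_indifferent; rewrite gapE onS subrr mulr0.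
- rewrite normc_lt shiftE radiusE -subr_lt0 => inS.
  by split=> sgn; [apply: mobius_attracting | apply: mobius_repelling]; rewrite gapE;
    [rewrite pmulr_rlt0 | rewrite nmulr_rgt0].
- rewrite normc_lt shiftE radiusE -subr_gt0 => outS.
  by split=> sgn; [apply: mobius_repelling | apply: mobius_attracting]; rewrite gapE;
    [rewrite pmulr_rgt0 | rewrite nmulr_rlt0].
Qed.

Lemma mobius_line_classification_eq :
  D = D' -> D != 0 ->
  let x := - ((C + C') / (2 * D)) in
  (C = C' -> indifferent lam) /\
  ((a < x /\ 0 < D * (C - C')) \/ (x < a /\ D * (C - C') < 0) -> attracting lam) /\
  ((x < a /\ 0 < D * (C - C')) \/ (a < x /\ D * (C - C') < 0) -> repelling lam).
Proof.
move=> DD' D_neq0 x.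
have gapE : gap = 2 * (D * (C - C')) * (a - x) by rewrite /gap /x -DD'; field.
split; [|split].
- by move=> CC'; apply: mobius_indifferent; rewrite gapE CC' subrr !(mulr0, mul0r).
- by move=> sgn; apply: mobius_attracting; rewrite gapE; case: sgn => -[]; nra.
- by move=> sgn; apply: mobius_repelling; rewrite gapE; case: sgn => -[]; nra.
Qed.

Lemma mobius_line_classification_opp :
  D = - D' -> D != 0 ->
  let x := (C' - C) / (2 * D) in
  (C = - C' -> indifferent lam) /\
  ((a < x /\ 0 < D * (C + C')) \/ (x < a /\ D * (C + C') < 0) -> attracting lam) /\
  ((x < a /\ 0 < D * (C + C')) \/ (a < x /\ D * (C + C') < 0) -> repelling lam).
Proof.
move=> DND' D_neq0 x.
have gapE : gap = 2 * (D * (C + C')) * (a - x).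
  rewrite /gap /x (_ : D' = - D); last by rewrite DND' opprK.
  by field.
split; [|split].
- by move=> CNC'; apply: mobius_indifferent; rewrite gapE CNC' addNr !(mulr0, mul0r).
- by move=> sgn; apply: mobius_attracting; rewrite gapE; case: sgn => -[]; nra.
- by move=> sgn; apply: mobius_repelling; rewrite gapE; case: sgn => -[]; nra.
Qed.

Lemma mobius_constant_classification :
  D = 0 -> D' = 0 ->
  (`|C| = `|C'| -> indifferent lam) /\
  (`|C| < `|C'| -> attracting lam) /\
  (`|C'| < `|C| -> repelling lam).
Proof.
move=> D0 D'0.
have gapE : gap = `|C| ^+ 2 - `|C'| ^+ 2.
  by rewrite /gap D0 D'0 !real_normK ?num_real //; ring.
split; [|split].
- by move=> CC'; apply: mobius_indifferent; rewrite gapE CC' subrr.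
- by move=> CC'; apply: mobius_attracting; rewrite gapE subr_lt0 ltr_pXn2r ?nnegrE.
- by move=> CC'; apply: mobius_repelling; rewrite gapE subr_gt0 ltr_pXn2r ?nnegrE.
Qed.

Lemma mobius_superattracting : D != 0 -> alpha = (- (C / D))%:C -> superattracting lam.
Proof.
rewrite /superattracting /lam => D_neq0 ->; rewrite -rmorphM -rmorphD.
by rewrite (_ : C + D * - (C / D) = 0) ?rmorph0 ?mul0r //; field.
Qed.

End MobiusMultiplier.

Theorem proposition3p6 (R : realType) (n k : nat) (A B : nat -> R)
    (alpha : R[i]) :
  (1 <= n)%N -> (1 <= k)%N -> odd (n + k) ->
  acoef A B alpha k != 0 ->
  1 + \sum_(1 <= j < k.+1) acoef A B alpha j != 0 ->
  1 + \sum_(1 <= j < k.+1) (-1) ^+ j * acoef A B alpha j != 0 ->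
  let O := Omap n k A B alpha in
  let lam := multiplier O (-1) in
  let C := Ccst n k A in
  let D := Dcst n k B in
  let C' := C'cst k A in
  let D' := D'cst k B in
  let Delta := D ^+ 2 - D' ^+ 2 in
  fixed_point O (-1) /\
  (Delta != 0 ->
     let c := (C * D - C' * D') / Delta in
     let r := (C' * D - C * D') / Delta in
     (`|alpha + c%:C| = `|r%:C| -> indifferent lam) /\
     (`|alpha + c%:C| < `|r%:C| ->
        (0 < Delta -> attracting lam) /\ (Delta < 0 -> repelling lam)) /\
     (`|r%:C| < `|alpha + c%:C| ->
        (0 < Delta -> repelling lam) /\ (Delta < 0 -> attracting lam))) /\
  (Delta = 0 ->
     (D = D' -> D != 0 ->
        let x := - ((C + C') / (2 * D)) in
        (C = C' -> indifferent lam) /\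
        ((complex.Re alpha < x /\ 0 < D * (C - C')) \/ (x < complex.Re alpha /\ D * (C - C') < 0) ->
           attracting lam) /\
        ((x < complex.Re alpha /\ 0 < D * (C - C')) \/ (complex.Re alpha < x /\ D * (C - C') < 0) ->
           repelling lam)) /\
     (D = - D' -> D != 0 ->
        let x := (C' - C) / (2 * D) in
        (C = - C' -> indifferent lam) /\
        ((complex.Re alpha < x /\ 0 < D * (C + C')) \/ (x < complex.Re alpha /\ D * (C + C') < 0) ->
           attracting lam) /\
        ((x < complex.Re alpha /\ 0 < D * (C + C')) \/ (complex.Re alpha < x /\ D * (C + C') < 0) ->
           repelling lam)) /\
     (D = 0 -> D' = 0 ->
        (`|C| = `|C'| -> indifferent lam) /\
        (`|C| < `|C'| -> attracting lam) /\
        (`|C'| < `|C| -> repelling lam))) /\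
  (D != 0 -> alpha = (- (C / D))%:C -> superattracting lam).
Proof.
(* k >= 1, a_k <> 0 and 1 + a_1 + ... + a_k <> 0 only make O_alpha a genuine
   map of degree n + k; the computation at -1 does not use them. *)
move=> n_gt0 _ odd_nk _ _ den_neq0 O lam C D C' D' Delta.
rewrite acoef_alternating_sum in den_neq0.
have -> : lam = (C%:C + D%:C * alpha) / (C'%:C + D'%:C * alpha).
  exact: multiplier_Omap_minus1.
split; first exact: Omap_fixed_minus1.
split; first exact: mobius_circle_classification.
split; last exact: mobius_superattracting.
move=> _; split; first exact: mobius_line_classification_eq.
split; first exact: mobius_line_classification_opp.
exact: mobius_constant_classification.
Qed.
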